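(* Let $n,m\ge 1$. For each $i\in\{1,\dots,n\}$ let $\Gamma_i\in\mathbb{R}^{m\times m}$ be a diagonal matrix with diagonal entries in $\{0,1\}$, let $\mathcal{B}_i\in\mathbb{R}^{l_i\times m}$, $Z_i\in\mathbb{R}^{k_i\times l_i}$ and $\mu_i\ge 0$ be such that $M_i=\mathcal{B}_i\Gamma_i\Gamma_i\mathcal{B}_i^{\top}+\mu_iZ_i^{\top}Z_i$ is invertible, and set $P_i=\Gamma_i-\Gamma_i\mathcal{B}_i^{\top}M_i^{-1}\mathcal{B}_i\Gamma_i$ and $\mathcal{P}_{III}=\sum_{i=1}^nP_i$. Let $\mathbf{1}\in\mathbb{R}^m$ be the all-ones vector. Then the following statements are equivalent: (a) $\mathcal{P}_{III}\mathbf{1}=0$; (b) $P_i\mathbf{1}=0$ for every $i\in\{1,\dots,n\}$; (c) for every $i\in\{1,\dots,n\}$ there exists $x_i\in\mathbb{R}^{l_i}$ with $\Gamma_i\mathcal{B}_i^{\top}x_i=\Gamma_i\mathbf{1}$ and, if $\mu_i>0$, additionally $Z_ix_i=0$.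
   Context: In the paper, $\Gamma_i$ is the visibility matrix of the $i$-th (partial) datum shape $D_i\in\mathbb{R}^{d\times m}$ (its $j$-th diagonal entry is $1$ iff the $j$-th point is observed in $D_i$), $\mathcal{B}_i=\mathcal{B}_i(D_i)$ is the matrix of features of the points of $D_i$ under a linear basis warp, $Z_i$ its regularization matrix and $\mu_i$ its smoothing weight. *)

From mathcomp Require Import all_boot all_order all_algebra.
Set Implicit Arguments. Unset Strict Implicit. Unset Printing Implicit Defensive.
Import Order.TTheory GRing.Theory Num.Theory.
Local Open Scope ring_scope.

Definition is_visibility (R : realFieldType) (m : nat) (G : 'M[R]_m) : Prop :=
  is_diag_mx G /\ (forall j : 'I_m, G j j = 0 \/ G j j = 1).

Definition Mmat (R : realFieldType) (m l k : nat) (G : 'M[R]_m)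
  (B : 'M[R]_(l, m)) (Z : 'M[R]_(k, l)) (mu : R) : 'M[R]_l :=
  B *m G *m G *m B^T + mu *: (Z^T *m Z).

Definition Pmat (R : realFieldType) (m l k : nat) (G : 'M[R]_m)
  (B : 'M[R]_(l, m)) (Z : 'M[R]_(k, l)) (mu : R) : 'M[R]_m :=
  G - G *m B^T *m invmx (Mmat G B Z mu) *m B *m G.

Definition ones (R : realFieldType) (m : nat) : 'cV[R]_m := const_mx 1.

(* Fix i and write y = M_i^{-1} B_i Γ_i v for the regularized least-squares fit
   of Γ_i v by Γ_i B_i^T y with penalty μ_i |Z_i y|^2, and r = Γ_i B_i^T y - Γ_i v
   for its residual.  Then P_i v = -r, and the normal equation
   B_i Γ_i r + μ_i Z_i^T Z_i y = 0 turns v^T P_i v into |r|^2 + μ_i |Z_i y|^2.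
   So every P_i is positive semidefinite, and P_III 1 = 0 forces 1^T P_i 1 = 0
   for each i, i.e. r = 0 and Z_i y = 0 when μ_i > 0: this y witnesses (c).
   Conversely a witness x of (c) satisfies M_i x = B_i Γ_i 1, so x = y, r = 0
   and P_i 1 = 0. *)

From mathcomp Require Import all_boot all_order all_algebra.
Import Order.TTheory GRing.Theory Num.Theory.
Set Implicit Arguments. Unset Strict Implicit. Unset Printing Implicit Defensive.
Local Open Scope ring_scope.

Section SquaredNorm.
Variable R : realFieldType.

Definition sqnorm p (v : 'cV[R]_p) : R := (v^T *m v) 0 0.

Lemma sqnormE p (v : 'cV[R]_p) : sqnorm v = \sum_(j < p) v j 0 ^+ 2.
Proof. by rewrite /sqnorm mxE; apply: eq_bigr => j _; rewrite mxE expr2. Qed.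

Lemma sqnorm_ge0 p (v : 'cV[R]_p) : 0 <= sqnorm v.
Proof. by rewrite sqnormE sumr_ge0 // => j _; rewrite sqr_ge0. Qed.

Lemma sqnorm_eq0 p (v : 'cV[R]_p) : (sqnorm v == 0) = (v == 0).
Proof.
apply/idP/eqP=> [|->]; last by rewrite /sqnorm trmx0 mul0mx mxE.
rewrite sqnormE psumr_eq0 => [/allP v0|j _]; last exact: sqr_ge0.
apply/matrixP=> i j; rewrite ord1 mxE.
by apply/eqP; rewrite -sqrf_eq0; exact: v0 (mem_index_enum _).
Qed.

End SquaredNorm.

Section QuadraticForm.
Variables (R : realFieldType) (m : nat).

Definition qform (A : 'M[R]_m) (v : 'cV[R]_m) : R := (v^T *m A *m v) 0 0.

Lemma qform_sum (I : finType) (A : I -> 'M[R]_m) v :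
  qform (\sum_i A i) v = \sum_i qform (A i) v.
Proof. by rewrite /qform mulmx_sumr mulmx_suml summxE. Qed.

Lemma sum_psd_mul_eq0 (I : finType) (A : I -> 'M[R]_m) v :
  (forall i, 0 <= qform (A i) v) ->
  (forall i, qform (A i) v = 0 -> A i *m v = 0) ->
  (\sum_i A i) *m v = 0 -> forall i, A i *m v = 0.
Proof.
move=> A_ge0 A_eq0 Av0 i; apply: A_eq0.
apply: (psumr_eq0P (P := xpredT) (fun j _ => A_ge0 j)) => //.
by rewrite -qform_sum /qform -mulmxA Av0 mulmx0 mxE.
Qed.

End QuadraticForm.

Lemma visibility_trmx (R : realFieldType) m (G : 'M[R]_m) :
  is_visibility G -> G^T = G.
Proof. by case=> /diag_mxP [d ->] _; exact: tr_diag_mx. Qed.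

Lemma visibility_idem (R : realFieldType) m (G : 'M[R]_m) :
  is_visibility G -> G *m G = G.
Proof.
case=> /diag_mxP [d ->] G01; rewrite mul_diag_mx; apply/matrixP=> i j; rewrite !mxE.
by have := G01 i; rewrite !mxE eqxx mulr1n; case=> ->; rewrite ?mul0r ?mul1r ?mul0rn.
Qed.

Section RegularizedProjection.
Variables (R : realFieldType) (m l k : nat) (G : 'M[R]_m) (B : 'M[R]_(l, m))
  (Z : 'M[R]_(k, l)) (mu : R).
Hypotheses (G_sym : G^T = G) (G_idem : G *m G = G) (M_unit : Mmat G B Z mu \in unitmx).

Let M := Mmat G B Z mu.
Let P := Pmat G B Z mu.

Definition fit (v : 'cV[R]_m) : 'cV[R]_l := invmx M *m (B *m G *m v).
Definition residual (v : 'cV[R]_m) : 'cV[R]_m := G *m B^T *m fit v - G *m v.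

Lemma Pmat_mul v : P *m v = - residual v.
Proof. by rewrite /P /Pmat /residual /fit mulmxBl opprB !mulmxA. Qed.

Lemma mulmxG_idem p (X : 'M[R]_(p, m)) (v : 'cV[R]_m) :
  X *m G *m (G *m v) = X *m G *m v.
Proof. by rewrite mulmxA -(mulmxA X) G_idem. Qed.

Lemma G_residual v : G *m residual v = residual v.
Proof. by rewrite /residual mulmxBr !mulmxA G_idem. Qed.

Lemma residual_normal_eq v :
  B *m G *m residual v + mu *: (Z^T *m Z *m fit v) = 0.
Proof.
set y := fit v.
have Mfit : (B *m G *m G *m B^T + mu *: (Z^T *m Z)) *m y = B *m G *m v.
  exact: mulKVmx.
rewrite /residual -/y mulmxBr mulmxG_idem addrAC; clearbody y.
by rewrite !mulmxA scalemxAl -mulmxDl Mfit subrr.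
Qed.

Lemma Pmat_qform v : qform P v = sqnorm (residual v) + mu * sqnorm (Z *m fit v).
Proof.
set r := residual v; set y := fit v.
have rr : r^T *m r = y^T *m (B *m G *m r) - (G *m v)^T *m r.
  have -> : r^T = y^T *m B *m G - (G *m v)^T.
    by rewrite /r /residual raddfB /= !trmx_mul trmxK G_sym mulmxA.
  by rewrite mulmxBl !mulmxA.
have zz : mu *: ((Z *m y)^T *m (Z *m y)) = y^T *m (mu *: (Z^T *m Z *m y)).
  by rewrite trmx_mul -scalemxAr !mulmxA.
have vr : v^T *m r = (G *m v)^T *m r by rewrite trmx_mul G_sym -mulmxA G_residual.
have PvE : v^T *m P *m v = r^T *m r + mu *: ((Z *m y)^T *m (Z *m y)).
  rewrite -mulmxA Pmat_mul mulmxN vr rr zz addrAC -mulmxDr residual_normal_eq.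
  by rewrite mulmx0 sub0r.
by rewrite /qform /sqnorm PvE [LHS]mxE [X in _ + X]mxE.
Qed.

Hypothesis mu_ge0 : 0 <= mu.

Lemma Pmat_qform_ge0 v : 0 <= qform P v.
Proof. by rewrite Pmat_qform addr_ge0 ?mulr_ge0 ?sqnorm_ge0. Qed.

Lemma Pmat_qform_eq0 v :
  qform P v = 0 -> residual v = 0 /\ (0 < mu -> Z *m fit v = 0).
Proof.
rewrite Pmat_qform => /eqP; rewrite paddr_eq0 ?mulr_ge0 ?sqnorm_ge0 // mulf_eq0.
case/andP; rewrite sqnorm_eq0 => /eqP r0 muZfit0; split=> // mu_gt0.
by move: muZfit0; rewrite gt_eqF //= sqnorm_eq0 => /eqP.
Qed.

Lemma Pmat_mul_eq0_qform v : P *m v = 0 <-> qform P v = 0.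
Proof.
split=> [Pv0|/Pmat_qform_eq0[r0 _]]; last by rewrite Pmat_mul r0 oppr0.
by rewrite /qform -mulmxA Pv0 mulmx0 mxE.
Qed.

Lemma Pmat_mul_eq0P v : P *m v = 0 <->
  exists x : 'cV[R]_l, G *m B^T *m x = G *m v /\ (0 < mu -> Z *m x = 0).
Proof.
split=> [/Pmat_mul_eq0_qform/Pmat_qform_eq0[r0 Zfit0] | [x [GBx ZX0]]].
  by exists (fit v); split=> //; apply/eqP; rewrite -subr_eq0 -/(residual v) r0.
have Mx : M *m x = B *m G *m v.
  have muZx0 : mu *: (Z^T *m Z *m x) = 0.
    move: mu_ge0; rewrite le0r => /orP[/eqP -> | mu_gt0]; first by rewrite scale0r.
    by rewrite -mulmxA ZX0 // mulmx0 scaler0.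
  have BGGBx : B *m G *m G *m B^T *m x = B *m G *m (G *m B^T *m x).
    by rewrite !mulmxA.
  by rewrite mulmxDl -scalemxAl muZx0 addr0 BGGBx GBx mulmxG_idem.
have fitE : fit v = x by rewrite /fit -Mx mulKmx.
by rewrite Pmat_mul /residual fitE GBx subrr oppr0.
Qed.

End RegularizedProjection.

Theorem theorem3 (R : realFieldType) (n m : nat) (hn : (1 <= n)%N) (hm : (1 <= m)%N)
  (l k : 'I_n -> nat)
  (Gamma : forall i : 'I_n, 'M[R]_m)
  (B : forall i : 'I_n, 'M[R]_(l i, m))
  (Z : forall i : 'I_n, 'M[R]_(k i, l i))
  (mu : 'I_n -> R)
  (hG : forall i, is_visibility (Gamma i))
  (hmu : forall i, 0 <= mu i)
  (hM : forall i, Mmat (Gamma i) (B i) (Z i) (mu i) \in unitmx) :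
  let P := fun i => Pmat (Gamma i) (B i) (Z i) (mu i) in
  let P3 := \sum_(i < n) P i in
  [/\ (P3 *m ones R m = 0 <-> forall i, P i *m ones R m = 0),
      ((forall i, P i *m ones R m = 0) <->
         forall i, exists x : 'cV[R]_(l i),
           Gamma i *m (B i)^T *m x = Gamma i *m ones R m /\
           (0 < mu i -> Z i *m x = 0))
    & (P3 *m ones R m = 0 <->
         forall i, exists x : 'cV[R]_(l i),
           Gamma i *m (B i)^T *m x = Gamma i *m ones R m /\
           (0 < mu i -> Z i *m x = 0))].
Proof.
move=> P P3.
have G_sym i := visibility_trmx (hG i).
have G_idem i := visibility_idem (hG i).
have a_b : P3 *m ones R m = 0 <-> forall i, P i *m ones R m = 0.
  split=> [|P1_0]; last by rewrite mulmx_suml big1.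
  apply: sum_psd_mul_eq0 => i; first exact: (Pmat_qform_ge0 (G_sym i) (G_idem i) (hM i) (hmu i)).
  by move/(Pmat_mul_eq0_qform (G_sym i) (G_idem i) (hM i) (hmu i)).
have b_c : (forall i, P i *m ones R m = 0) <->
    forall i, exists x : 'cV[R]_(l i),
      Gamma i *m (B i)^T *m x = Gamma i *m ones R m /\ (0 < mu i -> Z i *m x = 0).
  by split=> cond i; apply/(Pmat_mul_eq0P (G_sym i) (G_idem i) (hM i) (hmu i))/cond.
by split=> //; exact: iff_trans a_b b_c.
Qed.
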